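(* Suppose the network connectivity assumption and the Poincaré scaling assumption hold, and that for the given $H\in\mathcal H$ and $\ell\in\mathbb N$ the family $\{g_{T,\ell}:T\in\mathcal T_H\}$ satisfies the Riesz stability assumption with constant $C_{\mathrm r}(H,\ell)$. Then there exist constants $C,C'>0$, independent of $H$, $\ell$ and $f$ (depending only on $d,\alpha,\beta,\mu,C_{\mathrm{fr}}$, where $C_{\mathrm{fr}}$ is a constant with $|v|_M\le C_{\mathrm{fr}}|v|_L$ for all $v\in V$), such that for all $f\in\hat V$, with $u=\mathcal K^{-1}f$ and $u_{H,\ell}$ the SLOD approximation, $$|u-u_{H,\ell}|_L\le C\big(H|f-\Pi_Hf|_M+C_{\mathrm r}^{1/2}(H,\ell)\,\ell^{d/2}\,\sigma(H,\ell)\,|f|_M\big)\le C'\big(H^2|f|_L+C_{\mathrm r}^{1/2}(H,\ell)\,\ell^{d/2}\,\sigma(H,\ell)\,|f|_M\big).$$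
   Context: Let $d\in\mathbb N$, $\Omega=[0,1]^d$, and let $\mathcal G=(\mathcal N,\mathcal E)$ be a finite connected graph with at least two nodes, whose nodes $\mathcal N$ are distinct points of $\Omega$. Write $x\sim y$ if $\{x,y\}\in\mathcal E$, and $|x-y|$ for the Euclidean distance. For $\omega\subset\Omega$ let $\mathcal N(\omega)=\mathcal N\cap\omega$. Let $\Gamma\subset\partial\Omega$ with $\mathcal N(\Gamma)\neq\emptyset$. $\hat V$ is the space of real functions on $\mathcal N$ with $(u,v)=\sum_xu(x)v(x)$; $V=\{v\in\hat V:v=0\text{ on }\mathcal N(\Gamma)\}$; $\hat V_\omega,V_\omega$ are the functions in $\hat V$, resp. $V$, vanishing outside $\mathcal N(\omega)$; $\tilde V_\omega$ is the subspace of $V$ of functions vanishing at every node that is neither in $\mathcal N(\omega)$ nor adjacent to a node of $\mathcal N(\omega)$. Symmetric operators: $(M_xv,w)=\tfrac12\sum_{y\sim x}|x-y|v(x)w(x)$, $(L_xv,w)=\tfrac12\sum_{y\sim x}\frac{(v(x)-v(y))(w(x)-w(y))}{|x-y|}$, $(K_xv,w)=\tfrac12\sum_{y\sim x}\gamma_{xy}\frac{(v(x)-v(y))(w(x)-w(y))}{|x-y|}$ with $\gamma_{xy}=\gamma_{yx}\in[\alpha,\beta]$, $0<\alpha\le\beta<\infty$; $M,L,K$ are sums over all $x\in\mathcal N$, $M_\omega,L_\omega,K_\omega$ sums over $x\in\mathcal N(\omega)$. Seminorms $|v|_M^2=(Mv,v)$, $|v|_L^2=(Lv,v)$, $|v|_{M,\omega}^2=(M_\omega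 v,v)$, $|v|_{L,\omega}^2=(L_\omega v,v)$, $|v|_{V,\omega}^2=|v|_{M,\omega}^2+|v|_{L,\omega}^2$. $\mathcal K^{-1}:\hat V\to V$ maps $f$ to the unique $u\in V$ with $(Ku,v)=(Mf,v)$ $\forall v\in V$; $\mathcal K_\omega^{-1}:\hat V_\omega\to V_\omega$ maps $g$ to the unique $\varphi\in V_\omega$ with $(K_\omega\varphi,v)=(M_\omega g,v)$ $\forall v\in V_\omega$. Mesh: for $H>0$ with $1/H\in\mathbb N$, $\mathcal T_H$ consists of the cubes $I_1\times\dots\times I_d$, $I_i=[a_i,a_i+H)$, $a_i\in\{0,H,\dots,1-H\}$, except $I_i=[a_i,a_i+H]$ when $a_i+H=1$. $\mathsf N(\omega)$ is the union of all $T\in\mathcal T_H$ with $\overline T\cap\overline\omega\neq\emptyset$; $\mathsf N^1=\mathsf N$, $\mathsf N^\ell(\omega)=\mathsf N(\mathsf N^{\ell-1}(\omega))$. $\mathcal H$ is a finite set of admissible mesh sizes. $\mathbf 1_T$ is the indicator of nodes in $T$; $\mathbb P^0(\mathcal T_H)=\mathrm{span}\{\mathbf 1_T:T\in\mathcal T_H\}$; $\Pi_Hv=\sum_T\frac{(M_Tv,1)}{|1|_{M,T}^2}\mathbf 1_T$ (term $0$ if $T$ has no node). Network connectivity assumption: for every $H\in\mathcal H$, $T\in\mathcal T_H$ there is a connected subgraph of $\mathcal G$ containing all edges with at least one endpoint in $T$ and only edges with both endpoints in $\mathsf N(T)$. Poincaré scaling assumption: there is $\mu>0$ such that for all $H\in\mathcal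 H$, $T\in\mathcal T_H$, $v\in\hat V$ there is $c\in\mathbb R$ with $|v-c|_{M,T}\le\mu H|v|_{L,\mathsf N(T)}$. SLOD construction: fix $H\in\mathcal H$, $\ell\in\mathbb N$. For $T\in\mathcal T_H$ let $\omega=\mathsf N^\ell(T)$ and $\mathbb P^0(\mathcal T_{H,\omega})=\mathrm{span}\{\mathbf 1_{T'}:T'\in\mathcal T_H,\ T'\subset\omega\}$. For $q\in\mathbb P^0(\mathcal T_{H,\omega})$, let $\varphi_q=\mathcal K_\omega^{-1}q$, let $B_\omega\varphi_q$ be the functional $v\mapsto(K\varphi_q,v)-(Mq,v)$ on $\tilde V_\omega$, and let $\mathcal Rq\in\tilde V_\omega$ be the unique solution of $((L_\omega+M_\omega)\mathcal Rq,v)=(B_\omega\varphi_q,v)$ for all $v\in\tilde V_\omega$. Let $g_{T,\ell}$ be a minimizer of $q\mapsto|\mathcal Rq|_{V,\omega}^2/|q|_{M,\omega}^2$ over $q\in\mathbb P^0(\mathcal T_{H,\omega})$ with $|q|_{M,\omega}\ne 0$, normalized by $|g_{T,\ell}|_{M,\omega}=1$; set $\varphi_{T,\ell}=\mathcal K_\omega^{-1}g_{T,\ell}$, $\sigma_T(H,\ell)=|\mathcal Rg_{T,\ell}|_{V,\omega}$, and $\sigma(H,\ell)=\max_{T\in\mathcal T_H}\sigma_T(H,\ell)$. Let $V_{H,\ell}=\mathrm{span}\{\varphi_{T,\ell}:T\in\mathcal T_H\}$; the SLOD approximation $u_{H,\ell}\in V_{H,\ell}$ satisfies $(Ku_{H,\ell},v)=(Mf,v)$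 for all $v\in V_{H,\ell}$. Riesz stability assumption: there is $C_{\mathrm r}(H,\ell)>0$ such that for all real coefficients $(c_T)_{T\in\mathcal T_H}$, $C_{\mathrm r}^{-1}\sum_Tc_T^2\le|\sum_Tc_Tg_{T,\ell}|_M^2\le C_{\mathrm r}\sum_Tc_T^2$. *)

From HB Require Import structures.
From mathcomp Require Import all_boot all_order all_algebra.
From mathcomp Require Import boolp reals.
Set Implicit Arguments. Unset Strict Implicit. Unset Printing Implicit Defensive.
Import Order.TTheory GRing.Theory Num.Theory.
Local Open Scope ring_scope.

Section Defs.
Variable R : realType.
Variable d : nat.

Definition point := 'I_d -> R.
Definition dist (z w : point) : R := Num.sqrt (\sum_(i < d) (z i - w i) ^+ 2).
Definition inOmega (z : point) : bool := [forall i, (0 <= z i <= 1)].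
Definition onBoundary (z : point) : bool :=
  inOmega z && [exists i, (z i == 0) || (z i == 1)].

(* the network: nodes (a finite type) with positions, edges, Dirichlet part
   Gamma of the boundary, and edge coefficients gamma *)
Record network := Network {
  node : finType;
  pos : node -> point;
  adj : rel node;
  Gam : point -> Prop;
  gam : node -> node -> R }.

Variable G : network.
Local Notation N := (node G).
Local Notation p := (@pos G).
Local Notation adjG := (@adj G).

Definition wf_network (alpha beta : R) : Prop :=
  injective p /\ (forall x, inOmega (p x)) /\ (1 < #|N|)%N /\
  (forall x y, adjG x y = adjG y x) /\ (forall x, ~~ adjG x x) /\
  (forall x y, connect adjG x y) /\
  (forall z, @Gam G z -> onBoundary z) /\ (exists x, @Gam G (p x)) /\
  (forall x y, @gam G x y = @gam G y x) /\
  (forall x y, adjG x y -> alpha <= @gam G x y <= beta).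

Definition allN : N -> Prop := fun _ => True.

Definition Mform (S : N -> Prop) (v w : N -> R) : R :=
  \sum_(x | `[< S x >]) (2^-1 * \sum_(y | adjG x y) dist (p x) (p y) * v x * w x).
Definition Lform (S : N -> Prop) (v w : N -> R) : R :=
  \sum_(x | `[< S x >]) (2^-1 * \sum_(y | adjG x y)
      (v x - v y) * (w x - w y) / dist (p x) (p y)).
Definition Kform (S : N -> Prop) (v w : N -> R) : R :=
  \sum_(x | `[< S x >]) (2^-1 * \sum_(y | adjG x y)
      @gam G x y * (v x - v y) * (w x - w y) / dist (p x) (p y)).

Definition semiM (S : N -> Prop) (v : N -> R) : R := Num.sqrt (Mform S v v).
Definition semiL (S : N -> Prop) (v : N -> R) : R := Num.sqrt (Lform S v v).
Definition semiV (S : N -> Prop) (v : N -> R) : R :=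
  Num.sqrt (Mform S v v + Lform S v v).

Definition inV (v : N -> R) : Prop := forall x, @Gam G (p x) -> v x = 0.
Definition inVom (S : N -> Prop) (v : N -> R) : Prop :=
  inV v /\ forall x, ~ S x -> v x = 0.
Definition inVtilde (S : N -> Prop) (v : N -> R) : Prop :=
  inV v /\ forall x, ~ S x -> (forall y, adjG x y -> ~ S y) -> v x = 0.

(* u = K^{-1} f  and  phi = K_omega^{-1} g (defining properties) *)
Definition isKinv (f u : N -> R) : Prop :=
  inV u /\ forall v, inV v -> Kform allN u v = Mform allN f v.
Definition isKinvOm (S : N -> Prop) (g phi : N -> R) : Prop :=
  inVom S phi /\ forall v, inVom S v -> Kform S phi v = Mform S g v.

(* Mesh T_H with H = 1/n: cubes indexed by multi-indices a in {0..n-1}^d *)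
Definition idx (n : nat) := {ffun 'I_d -> 'I_n}.

Definition inCube (n : nat) (a : idx n) (z : point) : bool :=
  [forall i, ((a i)%:R / n%:R <= z i) &&
     (if ((a i).+1 == n)%N then z i <= (a i).+1%:R / n%:R
      else z i < (a i).+1%:R / n%:R)].
Definition closedCube (n : nat) (a : idx n) (z : point) : bool :=
  [forall i, (a i)%:R / n%:R <= z i <= (a i).+1%:R / n%:R].

(* a region that is a union of cubes is given by a set of indices *)
Definition Nb (n : nat) (P : idx n -> Prop) : idx n -> Prop :=
  fun b => exists a, P a /\ exists z, closedCube a z /\ closedCube b z.
Definition Nl (n : nat) (k : nat) (P : idx n -> Prop) : idx n -> Prop :=
  iter k (@Nb n) P.
Definition cube1 (n : nat) (a : idx n) : idx n -> Prop := fun b => b = a.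
Definition patch (n l : nat) (a : idx n) : idx n -> Prop := Nl l (cube1 a).

Definition nodesIn (n : nat) (P : idx n -> Prop) : N -> Prop :=
  fun x => exists b, P b /\ inCube b (p x).

Definition ind (n : nat) (a : idx n) : N -> R := fun x => (inCube a (p x))%:R.

Definition inP0 (n : nat) (P : idx n -> Prop) (q : N -> R) : Prop :=
  exists c : idx n -> R, forall x, q x = \sum_(b | `[< P b >]) c b * ind b x.

Definition isRq (S : N -> Prop) (q r : N -> R) : Prop :=
  exists phi, isKinvOm S q phi /\ inVtilde S r /\
    forall v, inVtilde S v ->
      Lform S r v + Mform S r v = Kform allN phi v - Mform allN q v.

Definition isSLODbasis (n l : nat) (a : idx n) (g phi r : N -> R) : Prop :=
  let S := nodesIn (patch l a) in
  inP0 (patch l a) g /\ semiM S g = 1 /\ isKinvOm S g phi /\ isRq S g r /\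
      forall q rq, inP0 (patch l a) q -> semiM S q <> 0 -> isRq S q rq ->
        semiV S r ^+ 2 / semiM S g ^+ 2 <= semiV S rq ^+ 2 / semiM S q ^+ 2.

Definition sigma (n l : nat) (r : idx n -> N -> R) : R :=
  \big[Num.max/0]_(a : idx n) semiV (nodesIn (patch l a)) (r a).

Definition inSpan (n : nat) (phi : idx n -> N -> R) (u : N -> R) : Prop :=
  exists c : idx n -> R, forall x, u x = \sum_(a : idx n) c a * phi a x.
Definition isSLOD (n : nat) (phi : idx n -> N -> R) (f uH : N -> R) : Prop :=
  inSpan phi uH /\ forall v, inSpan phi v -> Kform allN uH v = Mform allN f v.

Definition riesz (n : nat) (g : idx n -> N -> R) (Cr : R) : Prop :=
  forall c : idx n -> R,
    Cr^-1 * (\sum_a c a ^+ 2) <= semiM allN (fun x => \sum_a c a * g a x) ^+ 2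
    <= Cr * (\sum_a c a ^+ 2).

(* L^2 projection Pi_H onto piecewise constants (term 0 if |1|_{M,T} = 0,
   which in MathComp is automatic since 0^-1 = 0; made explicit here) *)
Definition PiH (n : nat) (f : N -> R) : N -> R := fun x =>
  \sum_(a : idx n)
    (if Mform (fun y => inCube a (p y)) (fun _ => 1) (fun _ => 1) == 0 then 0
     else Mform (fun y => inCube a (p y)) f (fun _ => 1)
          / Mform (fun y => inCube a (p y)) (fun _ => 1) (fun _ => 1)) * ind a x.

Definition netConn (n : nat) : Prop :=
  forall a : idx n, exists (Vs : pred N) (E : rel N),
    (forall x y, E x y -> adjG x y) /\ (forall x y, E x y -> E y x) /\
    (forall x y, E x y -> Vs x && Vs y) /\
    (forall x y, adjG x y -> inCube a (p x) || inCube a (p y) -> E x y) /\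
    (forall x y, E x y -> nodesIn (Nb (cube1 a)) x /\ nodesIn (Nb (cube1 a)) y) /\
    (forall x y, Vs x -> Vs y -> connect E x y).

Definition poincare (mu : R) (n : nat) : Prop :=
  forall (a : idx n) (v : N -> R), exists c : R,
    semiM (fun x => inCube a (p x)) (fun x => v x - c)
      <= mu * n%:R^-1 * semiL (nodesIn (Nb (cube1 a))) v.

End Defs.

From mathcomp Require Import all_boot all_order all_algebra.
From mathcomp Require Import boolp reals.
From mathcomp Require Import ring lra zify.
Import Order.TTheory GRing.Theory Num.Theory.
Local Open Scope ring_scope.
Set Implicit Arguments. Unset Strict Implicit. Unset Printing Implicit Defensive.

(* Since the Riesz-stable
   basis functions g_T are piecewise constant, Pi_H f = sum_T c_T g_T, and
   for e = u - sum_T c_T phi_T one has the error identity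
     |e|_K^2 = (M (f - Pi_H f), e) - sum_T c_T ((K phi_T, e) - (M g_T, e)).
   The first term is bounded with the Poincare inequality for Pi_H; each
   local residual is bounded by sigma(H,l) |e|_{V,omega_T} through its Riesz
   representative R g_T; the sum over T is controlled by the Riesz constant,
   the (2l+1)^d overlap of the patches and the Friedrichs inequality.
   Coercivity then bounds |e|_L, and the Galerkin best-approximation property
   transfers the bound to u - u_{H,l}.  The second inequality of the theorem
   is the Poincare bound |f - Pi_H f|_M <= mu 3^(d/2) H |f|_L. *)

Section OrderedFieldFacts.
Variable R : realFieldType.

Lemma mulrr_ge0 (x : R) : 0 <= x * x.
Proof. by rewrite -expr2 sqr_ge0. Qed.

(* Weighted Cauchy-Schwarz inequality for finite sums, via Lagrange's identity
   2 (A B - C^2) = sum_(i,j) w_i w_j (a_i b_j - a_j b_i)^2. *)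
Lemma cauchy_schwarz_sum (I : finType) (P : pred I) (w a b : I -> R) :
  (forall i, P i -> 0 <= w i) ->
  (\sum_(i | P i) w i * (a i * b i)) ^+ 2 <=
  (\sum_(i | P i) w i * (a i * a i)) * (\sum_(i | P i) w i * (b i * b i)).
Proof.
move=> w0.
set A := \sum_(i | P i) _ * (a i * a i).
set B := \sum_(i | P i) _ * (b i * b i).
set C := \sum_(i | P i) _ * (a i * b i).
have lagrange : \sum_(i | P i) \sum_(j | P j) w i * w j * (a i * b j - a j * b i) ^+ 2
    = 2 * (A * B - C ^+ 2).
  have -> : 2 * (A * B - C ^+ 2) = A * B + B * A - C * C - C * C.
    by rewrite expr2; ring.
  rewrite /A /B /C !big_distrlr /= -big_split -!sumrB /=.
  apply: eq_bigr => i _; rewrite -big_split -!sumrB /=.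
  by apply: eq_bigr => j _; ring.
have : 0 <= \sum_(i | P i) \sum_(j | P j) w i * w j * (a i * b j - a j * b i) ^+ 2.
  apply: sumr_ge0 => i Pi; apply: sumr_ge0 => j Pj.
  by rewrite mulr_ge0 ?sqr_ge0 // mulr_ge0 // w0.
by rewrite lagrange pmulr_rge0 // subr_ge0.
Qed.

Lemma coercive_bound (alpha t Q : R) : 0 < alpha -> 0 <= t -> 0 <= Q ->
  alpha * t ^+ 2 <= Q * t -> t <= Q / alpha.
Proof.
move=> a0 t0 Q0 h; rewrite ler_pdivlMr //.
have [->|tpos] := eqVneq t 0; first by rewrite mul0r.
have tp : 0 < t by rewrite lt_def tpos t0.
by rewrite -(ler_pM2r tp) mulrAC -expr2 mulrC.
Qed.

Lemma cross_terms (a b x y : R) : 0 <= a -> 0 <= b -> 0 <= x -> 0 <= y ->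
  a * x + b * y <= (a + b) * (x + y).
Proof.
move=> a0 b0 x0 y0; have := mulr_ge0 a0 y0; have := mulr_ge0 b0 x0.
by rewrite mulrDl !mulrDr; lra.
Qed.

(* From X <= k H Y: C (H X + rest) <= C (1 + k) (H^2 Y + rest); this turns
   the projection term H |f - Pi_H f|_M into H^2 |f|_L. *)
Lemma weaken_projection_term (C k H X Y rest : R) :
  0 <= C -> 0 <= k -> 0 <= H -> 0 <= Y -> 0 <= rest -> X <= k * H * Y ->
  C * (H * X + rest) <= C * (1 + k) * (H ^+ 2 * Y + rest).
Proof.
move=> C0 k0 H0 Y0 r0 hX; rewrite -mulrA ler_wpM2l //.
have hHX : H * X <= k * (H ^+ 2 * Y).
  have -> : k * (H ^+ 2 * Y) = H * (k * H * Y) by ring.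
  exact: ler_wpM2l.
have := mulr_ge0 k0 r0; have := mulr_ge0 (exprn_ge0 2 H0) Y0.
by rewrite mulrDl mul1r mulrDr; lra.
Qed.

End OrderedFieldFacts.

Section SqrtFacts.
Variable R : rcfType.

Lemma sqr_le_sqrtM (x a b : R) : 0 <= a -> 0 <= b -> x ^+ 2 <= a * b ->
  `|x| <= Num.sqrt a * Num.sqrt b.
Proof. by move=> a0 b0 h; rewrite -sqrtrM // -sqrtr_sqr; exact: ler_wsqrtr. Qed.

Lemma cauchy_schwarz_sqrt (I : finType) (P : pred I) (w a b : I -> R) :
  (forall i, P i -> 0 <= w i) ->
  `|\sum_(i | P i) w i * (a i * b i)| <=
  Num.sqrt (\sum_(i | P i) w i * (a i * a i)) *
  Num.sqrt (\sum_(i | P i) w i * (b i * b i)).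
Proof.
move=> w0; apply: sqr_le_sqrtM; last exact: cauchy_schwarz_sum.
  by apply: sumr_ge0 => i Pi; rewrite mulr_ge0 ?w0 ?mulrr_ge0.
by apply: sumr_ge0 => i Pi; rewrite mulr_ge0 ?w0 ?mulrr_ge0.
Qed.

Lemma cauchy_schwarz2 (x1 x2 y1 y2 : R) :
  x1 * y1 + x2 * y2 <= Num.sqrt (x1 ^+ 2 + x2 ^+ 2) * Num.sqrt (y1 ^+ 2 + y2 ^+ 2).
Proof.
apply: le_trans (ler_norm _) _; apply: sqr_le_sqrtM; rewrite ?addr_ge0 ?sqr_ge0 //.
rewrite -subr_ge0.
have -> : (x1 ^+ 2 + x2 ^+ 2) * (y1 ^+ 2 + y2 ^+ 2) - (x1 * y1 + x2 * y2) ^+ 2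
  = (x1 * y2 - x2 * y1) ^+ 2 by ring.
exact: sqr_ge0.
Qed.

Lemma sqrt_le_sqr (X Y k : R) : 0 <= X -> 0 <= Y -> 0 <= k ->
  Num.sqrt X <= k * Num.sqrt Y -> X <= k ^+ 2 * Y.
Proof.
move=> X0 Y0 k0 h.
rewrite -(sqr_sqrtr X0) -[Y](sqr_sqrtr Y0) -exprMn !expr2.
by apply: ler_pM; rewrite ?sqrtr_ge0.
Qed.

End SqrtFacts.

(* All bilinear forms of the paper are sums over directed edges
   i = (x, y) of a weight w i times a product of "jumps" v x - s * v y:
   s = 0 gives the mass form M, s = 1 the stiffness forms L and K. *)
Section EdgeForms.
Variable R : rcfType.
Variable N : finType.

Definition jump (s : R) (v : N -> R) (i : N * N) : R := v i.1 - s * v i.2.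
Definition eform (P : pred (N * N)) (w : N * N -> R) (s : R) (v v' : N -> R) : R :=
  \sum_(i | P i) w i * (jump s v i * jump s v' i).

Section FixedWeights.
Variables (P : pred (N * N)) (w : N * N -> R) (s : R).
Local Notation E := (eform P w s).

Lemma eform_sym v v' : E v v' = E v' v.
Proof. by apply: eq_bigr => i _; rewrite [jump s v i * _]mulrC. Qed.

Lemma eform_lin (a b : R) v1 v2 v' :
  E (fun x => a * v1 x + b * v2 x) v' = a * E v1 v' + b * E v2 v'.
Proof.
by rewrite /eform !mulr_sumr -big_split; apply: eq_bigr => i _; rewrite /jump /=; ring.
Qed.

Lemma eformDl v1 v2 v' : E (fun x => v1 x + v2 x) v' = E v1 v' + E v2 v'.
Proof.
have -> : (fun x => v1 x + v2 x) = (fun x => 1 * v1 x + 1 * v2 x).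
  by apply/funext => x; rewrite !mul1r.
by rewrite eform_lin !mul1r.
Qed.

Lemma eformBl v1 v2 v' : E (fun x => v1 x - v2 x) v' = E v1 v' - E v2 v'.
Proof.
have -> : (fun x => v1 x - v2 x) = (fun x => 1 * v1 x + (-1) * v2 x).
  by apply/funext => x; rewrite mul1r mulN1r.
by rewrite eform_lin mul1r mulN1r.
Qed.

Lemma eformBr v v1 v2 : E v (fun x => v1 x - v2 x) = E v v1 - E v v2.
Proof. by rewrite eform_sym eformBl !(eform_sym v). Qed.

Lemma eformZr (k : R) v v' : E v (fun x => k * v' x) = k * E v v'.
Proof.
have -> : (fun x => k * v' x) = (fun x => k * v' x + 0 * v' x).
  by apply/funext => x; rewrite mul0r addr0.
by rewrite eform_sym eform_lin mul0r addr0 eform_sym.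
Qed.

Lemma eform_suml (I : finType) (c : I -> R) (phi : I -> N -> R) v' :
  E (fun x => \sum_a c a * phi a x) v' = \sum_a c a * E (phi a) v'.
Proof.
rewrite /eform; under [RHS]eq_bigr do rewrite mulr_sumr.
rewrite exchange_big /=; apply: eq_bigr => i _.
rewrite /jump /= mulr_sumr -sumrB mulr_suml mulr_sumr.
by apply: eq_bigr => a _; ring.
Qed.

Lemma eform_pythagoras v v' : E v v' = 0 ->
  E (fun x => v x + v' x) (fun x => v x + v' x) = E v v + E v' v'.
Proof.
move=> ortho; rewrite eformDl !(eform_sym _ (fun x => v x + v' x)) !eformDl.
by rewrite ortho eform_sym ortho addr0 add0r.
Qed.

Lemma eform_ext v v1 v2 :
  (forall i, P i -> jump s v i != 0 -> jump s v1 i = jump s v2 i) -> E v v1 = E v v2.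
Proof.
move=> h; apply: eq_bigr => i Pi.
have [->|nz] := eqVneq (jump s v i) 0; first by rewrite !mul0r mulr0.
by rewrite h.
Qed.

Lemma eform_ext2 v1 v2 :
  (forall i, P i -> jump s v1 i = jump s v2 i) -> E v1 v1 = E v2 v2.
Proof. by move=> h; apply: eq_bigr => i Pi; rewrite h. Qed.

Hypothesis w_ge0 : forall i, P i -> 0 <= w i.

Lemma eform_ge0 v : 0 <= E v v.
Proof. by apply: sumr_ge0 => i Pi; rewrite mulr_ge0 ?w_ge0 ?mulrr_ge0. Qed.

Lemma eform_CS v v' : `|E v v'| <= Num.sqrt (E v v) * Num.sqrt (E v' v').
Proof. exact: cauchy_schwarz_sqrt. Qed.

Lemma eform_CS_le v v' : E v v' <= Num.sqrt (E v v) * Num.sqrt (E v' v').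
Proof. exact: le_trans (ler_norm _) (eform_CS v v'). Qed.

End FixedWeights.

Lemma eform_eq0 (P : pred (N * N)) w s v :
  (forall i, P i -> 0 < w i) -> eform P w s v v = 0 -> forall i, P i -> jump s v i = 0.
Proof.
move=> w0 h0 i Pi; have /eqP := psumr_eq0P (fun j Pj => mulr_ge0 (ltW (w0 j Pj))
  (mulrr_ge0 (jump s v j))) h0 Pi.
by rewrite mulf_eq0 -expr2 sqrf_eq0 (gt_eqF (w0 _ Pi)) => /eqP.
Qed.

Lemma eform_le_weights (P : pred (N * N)) w w' s (k k' : R) v :
  (forall i, P i -> k * w i <= k' * w' i) ->
  k * eform P w s v v <= k' * eform P w' s v v.
Proof.
move=> h; rewrite /eform !mulr_sumr; apply: ler_sum => i Pi.
by rewrite mulrA [X in _ <= X]mulrA; apply: ler_wpM2r; [exact: mulrr_ge0 | exact: h].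
Qed.

Lemma sum_count (A : finType) (Q : A -> pred (N * N)) (P : pred (N * N))
    (F : N * N -> R) : (forall a i, Q a i -> P i) ->
  \sum_(a : A) \sum_(i | Q a i) F i = \sum_(i | P i) #|[pred a | Q a i]|%:R * F i.
Proof.
move=> QP; under eq_bigr do rewrite big_mkcond.
rewrite exchange_big (bigID P) /= [X in _ + X]big1 ?addr0 => [|i nPi]; last first.
  by rewrite big1 // => a _; case: ifP => // /QP; rewrite (negbTE nPi).
apply: eq_bigr => i _; rewrite -big_mkcond /= sumr_const mulr_natl.
by congr (_ *+ _); apply: eq_card.
Qed.

Lemma eform_overlap (A : finType) (Q : A -> pred (N * N)) (P : pred (N * N)) w s
    (K : R) v :
  (forall i, P i -> 0 <= w i) -> (forall a i, Q a i -> P i) ->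
  (forall i, P i -> #|[pred a | Q a i]|%:R <= K) ->
  \sum_a eform (Q a) w s v v <= K * eform P w s v v.
Proof.
move=> w0 QP hK; rewrite /eform (sum_count _ QP) mulr_sumr.
apply: ler_sum => i Pi; rewrite mulrA [X in _ <= X]mulrA.
by apply: ler_wpM2r; [exact: mulrr_ge0 | apply: ler_wpM2r; [exact: w0 | exact: hK]].
Qed.

Lemma eform_partition (A : finType) (Q : A -> pred (N * N)) (P : pred (N * N)) w s v v' :
  (forall a i, Q a i -> P i) -> (forall i, P i -> #|[pred a | Q a i]| = 1%N) ->
  \sum_a eform (Q a) w s v v' = eform P w s v v'.
Proof.
move=> QP h1; rewrite /eform (sum_count _ QP).
by apply: eq_bigr => i Pi; rewrite h1 // mul1r.
Qed.

End EdgeForms.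

(* The mesh T_H for H = 1/n, with cubes indexed by a in {0..n-1}^d: every
   point of Omega lies in exactly one cube, and the k-th neighbourhood
   N^k(T_a) only contains cubes whose index is within k of a in every
   direction, hence at most (2k+1)^d of them. *)
Section Cubes.
Variables (R : realType) (d n : nat).

Definition near_idx k (b : idx d n) : {pred idx d n} :=
  [pred a : idx d n | [forall i, (a i <= b i + k)%N && (b i <= a i + k)%N]].

Lemma card_near k (b : idx d n) : (#|near_idx k b| <= (2 * k).+1 ^ d)%N.
Proof.
pose h (a : idx d n) : {ffun 'I_d -> 'I_(2 * k).+1} := [ffun i => inord (a i + k - b i)].
have := @leq_card_in _ _ h (near_idx k b); rewrite card_ffun !card_ord; apply.
move=> a1 a2; rewrite !inE => /forallP h1 /forallP h2 /ffunP he.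
apply/ffunP => i; apply/val_inj.
have := he i; rewrite !ffunE => /(congr1 val).
have /andP [x1 x2] := h1 i; have /andP [y1 y2] := h2 i.
by rewrite /= !inordK; lia.
Qed.

Section PositiveMesh.
Hypothesis n_gt0 : (0 < n)%N.

Lemma ndiv_le (a b : nat) : (a%:R / n%:R <= b%:R / n%:R :> R) = (a <= b)%N.
Proof. by rewrite ler_pM2r ?invr_gt0 ?ltr0n // ler_nat. Qed.

Lemma cube_unique (a b : idx d n) (z : point R d) :
  inCube a z -> inCube b z -> a = b.
Proof.
have le_idx (a' b' : idx d n) i : inCube a' z -> inCube b' z -> (a' i <= b' i)%N.
  move=> /forallP /(_ i) /andP [ha1 _] /forallP /(_ i) /andP [_ hb2].
  rewrite leqNgt; apply/negP => lt.
  have ne : ((b' i).+1 == n) = false.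
    by apply/negbTE; rewrite neq_ltn (leq_trans _ (ltn_ord (a' i))).
  rewrite ne in hb2.
  by have := lt_le_trans hb2 (le_trans (eqbRL (ndiv_le _ _) lt) ha1); rewrite ltxx.
move=> ha hb; apply/ffunP => i; apply/val_inj/anti_leq.
by rewrite !le_idx.
Qed.

(* Along each axis, take the last grid point i/n below the coordinate. *)
Lemma cube_exists (z : point R d) : inOmega z -> exists a : idx d n, inCube a z.
Proof.
move=> /forallP hz; case: n n_gt0 => // m _.
have hk i : exists k : 'I_m.+1, (k%:R / m.+1%:R <= z i) &&
   (if (k.+1 == m.+1)%N then z i <= k.+1%:R / m.+1%:R else z i < k.+1%:R / m.+1%:R).
  have /andP [z0 z1] := hz i.
  have P0 : (fun k : 'I_m.+1 => (k%:R / m.+1%:R <= z i)) ord0 by rewrite /= mul0r.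
  case: (@arg_maxnP _ ord0 (fun k : 'I_m.+1 => (k%:R / m.+1%:R <= z i)) val P0)
    => k hk hmax; exists k; rewrite hk /=.
  case: ifP => [/eqP -> | ne]; first by rewrite divff ?pnatr_eq0.
  rewrite ltNge; apply/negP => hle.
  have lt : (k.+1 < m.+1)%N by rewrite ltn_neqAle ne ltn_ord.
  by have := hmax (Ordinal lt) hle; rewrite /= ltnn.
have [f hf] := choice hk.
by exists [ffun i => f i]; apply/forallP => i; rewrite ffunE; exact: hf.
Qed.

Lemma closed_near (a b : idx d n) (z : point R d) i :
  closedCube a z -> closedCube b z -> (a i <= (b i).+1)%N /\ (b i <= (a i).+1)%N.
Proof.
move=> /forallP /(_ i) /andP [a1 a2] /forallP /(_ i) /andP [b1 b2].
by split; rewrite -ndiv_le; apply: le_trans; eassumption.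
Qed.

Lemma Nl_near k (a b : idx d n) :
  Nl R k (cube1 a) b -> forall i, (a i <= b i + k)%N /\ (b i <= a i + k)%N.
Proof.
elim: k b => [|k IH] b; first by rewrite /Nl /= /cube1 => -> i; rewrite addn0.
rewrite /Nl iterS => -[a' [ha' [z [c1 c2]]]] i.
have [h1 h2] := IH _ ha' i; have [h3 h4] := closed_near i c1 c2.
by split; lia.
Qed.

End PositiveMesh.

(* Maximal number of mesh cubes within k layers of a given cube. *)
Definition nb_count (k : nat) : R := ((2 * k).+1 ^ d)%N%:R.

Lemma nb_count_le k : (0 < k)%N -> nb_count k <= nb_count 1 * k%:R ^+ d.
Proof.
move=> k_gt0; rewrite /nb_count -natrX -natrM ler_nat -expnMn.
by case: (d) => [|e]; [rewrite !expn0 | rewrite leq_exp2r //; lia].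
Qed.

End Cubes.

(* If g_a = sum_b co a b * ind_b for a square coefficient table co and the g_a
   are linearly independent, then every combination of the ind_b is a
   combination of the g_a (the table is an invertible matrix). *)
Section SquareSpan.
Variable R : fieldType.
Variables T N : finType.
Variables (g ind : T -> N -> R) (co : T -> T -> R).
Hypothesis gE : forall a x, g a x = \sum_b co a b * ind b x.
Hypothesis g_free : forall c : T -> R, (forall x, \sum_a c a * g a x = 0) -> forall a, c a = 0.

Definition coef_mx : 'M[R]_#|T| := \matrix_(i, j) co (enum_val i) (enum_val j).

Lemma sum_enum_rank (F : 'I_#|T| -> R) : \sum_i F i = \sum_(a : T) F (enum_rank a).
Proof.
apply: (reindex enum_rank); apply: onW_bij.
by exists enum_val; [exact: enum_rankK | exact: enum_valK].
Qed.

Lemma mul_coef_mx (u : 'rV[R]_#|T|) b :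
  (u *m coef_mx) 0 (enum_rank b) = \sum_a u 0 (enum_rank a) * co a b.
Proof. by rewrite !mxE sum_enum_rank; apply: eq_bigr => a _; rewrite mxE !enum_rankK. Qed.

Lemma comb_expand (c : T -> R) x :
  \sum_a c a * g a x = \sum_b (\sum_a c a * co a b) * ind b x.
Proof.
under eq_bigr do rewrite gE mulr_sumr.
rewrite exchange_big /=; apply: eq_bigr => b _; rewrite mulr_suml.
by apply: eq_bigr => a _; rewrite mulrA.
Qed.

Lemma coef_mx_free : row_free coef_mx.
Proof.
rewrite -kermx_eq0; apply/eqP/row_matrixP => i; rewrite row0.
have hk : row i (kermx coef_mx) *m coef_mx = 0 by apply/sub_kermxP; exact: row_sub.
pose c a := row i (kermx coef_mx) 0 (enum_rank a).
have c0 : forall a, c a = 0.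
  apply: g_free => x; rewrite comb_expand big1 // => b _.
  by rewrite /c -mul_coef_mx hk mxE mul0r.
apply/rowP => j; rewrite mxE.
by have := c0 (enum_val j); rewrite /c enum_valK mxE => ->; rewrite mxE.
Qed.

Lemma span_square (pi : T -> R) :
  exists c : T -> R, forall x, \sum_a c a * g a x = \sum_b pi b * ind b x.
Proof.
have U : coef_mx \in unitmx by rewrite -row_free_unit coef_mx_free.
pose c0 := (\row_j pi (enum_val j)) *m invmx coef_mx.
exists (fun a => c0 0 (enum_rank a)) => x; rewrite comb_expand.
apply: eq_bigr => b _; congr (_ * _).
by rewrite -mul_coef_mx /c0 mulmxKV // mxE enum_rankK.
Qed.

End SquareSpan.

Section Network.
Variables (R : realType) (d : nat) (G : network R d).
Local Notation N := (node G).
Local Notation p := (@pos R d G).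
Local Notation adjG := (@adj R d G).
Local Notation allN := (@allN R d G).
Local Notation nb_count := (@nb_count R d).

Definition edges (S : N -> Prop) : pred (N * N) := fun i => `[< S i.1 >] && adjG i.1 i.2.
Definition wM (i : N * N) : R := 2^-1 * dist (p i.1) (p i.2).
Definition wL (i : N * N) : R := 2^-1 / dist (p i.1) (p i.2).
Definition wK (i : N * N) : R := 2^-1 * @gam R d G i.1 i.2 / dist (p i.1) (p i.2).

Local Notation M S := (eform (edges S) wM 0).
Local Notation L S := (eform (edges S) wL 1).
Local Notation K S := (eform (edges S) wK 1).

Lemma MformE S v w : Mform S v w = M S v w.
Proof.
rewrite /Mform; under eq_bigr do rewrite mulr_sumr.
by rewrite pair_big_dep; apply: eq_bigr => i _; rewrite /wM /jump; ring.
Qed.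

Lemma LformE S v w : Lform S v w = L S v w.
Proof.
rewrite /Lform; under eq_bigr do rewrite mulr_sumr.
by rewrite pair_big_dep; apply: eq_bigr => i _; rewrite /wL /jump; ring.
Qed.

Lemma KformE S v w : Kform S v w = K S v w.
Proof.
rewrite /Kform; under eq_bigr do rewrite mulr_sumr.
by rewrite pair_big_dep; apply: eq_bigr => i _; rewrite /wK /jump; ring.
Qed.

Lemma wM_ge0 i : 0 <= wM i.
Proof. by rewrite /wM mulr_ge0 ?invr_ge0 ?ler0n ?sqrtr_ge0. Qed.
Lemma wL_ge0 i : 0 <= wL i.
Proof. by rewrite /wL mulr_ge0 ?invr_ge0 ?ler0n ?sqrtr_ge0. Qed.

Lemma M_ge0 S v : 0 <= M S v v.
Proof. by apply: eform_ge0 => i _; exact: wM_ge0. Qed.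
Lemma L_ge0 S v : 0 <= L S v v.
Proof. by apply: eform_ge0 => i _; exact: wL_ge0. Qed.

Lemma semiME S v : semiM S v = Num.sqrt (M S v v).
Proof. by rewrite /semiM MformE. Qed.
Lemma semiLE S v : semiL S v = Num.sqrt (L S v v).
Proof. by rewrite /semiL LformE. Qed.

Lemma M_CS S v w : M S v w <= Num.sqrt (M S v v) * Num.sqrt (M S w w).
Proof. by apply: eform_CS_le => i _; exact: wM_ge0. Qed.

Lemma edges_sub (S : N -> Prop) i : edges S i -> edges allN i.
Proof. by move=> /andP [_ a]; rewrite /edges a andbT; apply/asboolP. Qed.

Section WellFormed.
Variables alpha beta : R.
Hypothesis wf : wf_network G alpha beta.
Hypothesis alpha_gt0 : 0 < alpha.

Lemma adj_sym x y : adjG x y = adjG y x.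
Proof. by case: wf => _ [_ [_ [h _]]]; apply: h. Qed.

Lemma gam_bound x y : adjG x y -> alpha <= @gam R d G x y <= beta.
Proof. by case: wf => _ [_ [_ [_ [_ [_ [_ [_ [_ h]]]]]]]]; apply: h. Qed.

Lemma node_inOmega x : inOmega (p x).
Proof. by case: wf => _ [h _]. Qed.

(* Distinct nodes have distinct positions, so edge lengths are positive. *)
Lemma dist_gt0 x y : adjG x y -> 0 < dist (p x) (p y).
Proof.
move=> axy; rewrite lt_def sqrtr_ge0 andbT; apply/negP => /eqP h0.
have hs : \sum_(i < d) (p x i - p y i) ^+ 2 = 0.
  apply/eqP; rewrite eq_le sumr_ge0 ?andbT; last by move=> i _; exact: sqr_ge0.
  by rewrite -sqrtr_eq0; apply/eqP.
have e : p x = p y.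
  apply/funext => i; apply/eqP; rewrite -subr_eq0 -sqrf_eq0; apply/eqP.
  by apply: (psumr_eq0P (P := predT) _ hs) => // j _; exact: sqr_ge0.
case: wf => inj [_ [_ [_ [irr _]]]].
by have := irr x; rewrite {2}(inj _ _ e) axy.
Qed.

Lemma L_le_K S v : alpha * L S v v <= K S v v.
Proof.
rewrite -[K S v v]mul1r; apply: eform_le_weights => i /andP [_ a].
have /andP [h _] := gam_bound a; rewrite mul1r /wL /wK mulrCA mulrA.
by rewrite ler_wpM2r ?invr_ge0 ?sqrtr_ge0 // ler_wpM2l ?invr_ge0 ?ler0n.
Qed.

Lemma K_le_L S v : K S v v <= beta * L S v v.
Proof.
rewrite -[K S v v]mul1r; apply: eform_le_weights => i /andP [_ a].
have /andP [_ h] := gam_bound a; rewrite mul1r /wL /wK mulrCA mulrA.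
by rewrite ler_wpM2r ?invr_ge0 ?sqrtr_ge0 // ler_wpM2l ?invr_ge0 ?ler0n.
Qed.

(* The weights of K are positive on edges, so |.|_K is a seminorm with the
   same kernel as |.|_L. *)
Lemma wK_gt0 i : adjG i.1 i.2 -> 0 < wK i.
Proof.
move=> a; have /andP [h _] := gam_bound a.
rewrite /wK mulr_gt0 ?invr_gt0 ?dist_gt0 // mulr_gt0 ?invr_gt0 ?ltr0n //.
exact: lt_le_trans alpha_gt0 h.
Qed.

Lemma K_ge0 S v : 0 <= K S v v.
Proof. by apply: eform_ge0 => i /andP [_ a]; exact: ltW (wK_gt0 a). Qed.

Section Projection.
Variable n : nat.
Hypothesis n_gt0 : (0 < n)%N.

Definition cube_of (x : N) : idx d n := xchoose (cube_exists n_gt0 (node_inOmega x)).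

Lemma inCubeE a x : inCube a (p x) = (a == cube_of x).
Proof.
have cx := xchooseP (cube_exists n_gt0 (node_inOmega x)).
by apply/idP/eqP => [h|->]; [exact: (cube_unique n_gt0 h cx) | exact: cx].
Qed.

Lemma sum_ind (c : idx d n -> R) x : \sum_a c a * ind a x = c (cube_of x).
Proof.
rewrite (bigD1 (cube_of x)) //= big1 ?addr0; first by rewrite /ind inCubeE eqxx mulr1.
by move=> a /negbTE ne; rewrite /ind inCubeE ne mulr0.
Qed.

Definition cubeN (a : idx d n) : N -> Prop := fun x => inCube a (p x).

Definition cube_mean (h : N -> R) a : R :=
  if Mform (cubeN a) (fun _ => 1) (fun _ => 1) == 0 then 0
  else Mform (cubeN a) h (fun _ => 1) / Mform (cubeN a) (fun _ => 1) (fun _ => 1).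

Lemma PiHE h x : PiH n h x = cube_mean h (cube_of x).
Proof. exact: sum_ind. Qed.

Lemma PiH_on_edge a h i : edges (cubeN a) i -> PiH n h i.1 = cube_mean h a.
Proof.
by move=> /andP [/asboolP c _]; rewrite PiHE; move: c; rewrite /cubeN inCubeE => /eqP ->.
Qed.

Lemma mean_orth a h : M (cubeN a) (fun x => h x - cube_mean h a) (fun _ => 1) = 0.
Proof.
have -> : (fun x => h x - cube_mean h a) = (fun x => 1 * h x + (- cube_mean h a) * 1).
  by apply/funext => x; rewrite mul1r mulr1.
rewrite eform_lin mul1r -!MformE /cube_mean.
case: ifP => [/eqP e | /negbT ne]; last by rewrite mulNr divfK // subrr.
rewrite e mulr0 addr0; apply/eqP; rewrite -normr_le0.
have := eform_CS (P := edges (cubeN a)) 0 (fun i _ => wM_ge0 i) h (fun _ => 1).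
by rewrite -!MformE e sqrtr0 mulr0.
Qed.

Lemma eform_restrict (Sb : N -> bool) (w : N * N -> R) v v' :
  eform (edges allN) w 0 (fun x => (Sb x)%:R * v x) v' = eform (edges Sb) w 0 v v'.
Proof.
rewrite /eform [LHS]big_mkcond [RHS]big_mkcond; apply: eq_bigr => i _.
rewrite /edges asboolT // asboolb /jump /= !mul0r !subr0.
by case: (Sb i.1); case: (adjG _ _); rewrite /= ?mul1r ?mul0r ?mulr0.
Qed.

Lemma PiH_orth h w : M allN (fun x => h x - PiH n h x) (PiH n w) = 0.
Proof.
rewrite eform_sym (_ : PiH n w = fun x => \sum_a cube_mean w a * ind a x) //.
rewrite eform_suml big1 // => a _.
have -> : ind a = fun x => (inCube a (p x))%:R * 1 by apply/funext => x; rewrite mulr1.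
rewrite eform_restrict (eform_ext _ (v2 := fun x => h x - cube_mean h a)).
  by rewrite eform_sym mean_orth mulr0.
by move=> i hi _; rewrite /jump !mul0r !subr0 (PiH_on_edge h hi).
Qed.

Lemma PiH_stable h : M allN (PiH n h) (PiH n h) <= M allN h h.
Proof.
have -> : M allN h h = M allN (fun x => (h x - PiH n h x) + PiH n h x)
    (fun x => (h x - PiH n h x) + PiH n h x).
  by congr (M allN _ _); apply/funext => x; rewrite subrK.
by rewrite eform_pythagoras ?PiH_orth // lerDr M_ge0.
Qed.

Lemma mean_best a h c :
  M (cubeN a) (fun x => h x - cube_mean h a) (fun x => h x - cube_mean h a)
  <= M (cubeN a) (fun x => h x - c) (fun x => h x - c).
Proof.
have -> : (fun x => h x - c) =
    (fun x => (h x - cube_mean h a) + (cube_mean h a - c) * (fun _ => 1) x).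
  by apply/funext => x /=; rewrite mulr1 addrA subrK.
have ortho : M (cubeN a) (fun x => h x - cube_mean h a)
    (fun x => (cube_mean h a - c) * (fun _ => 1) x) = 0.
  by rewrite eformZr mean_orth mulr0.
by rewrite (eform_pythagoras ortho) lerDl M_ge0.
Qed.

(* Each edge starts in exactly one cube, so the projection error splits into
   local errors. *)
Lemma PiH_error_split h :
  M allN (fun x => h x - PiH n h x) (fun x => h x - PiH n h x)
  = \sum_a M (cubeN a) (fun x => h x - cube_mean h a) (fun x => h x - cube_mean h a).
Proof.
rewrite -(@eform_partition _ _ _ (fun a => edges (cubeN a)) (edges allN)).
- apply: eq_bigr => a _; apply: eform_ext2 => i hi.
  by rewrite /jump !mul0r !subr0 (PiH_on_edge h hi).
- by move=> a i; exact: edges_sub.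
move=> i /andP [_ ai]; apply: (@eq_card1 _ (cube_of i.1)) => a.
by rewrite !inE /edges asboolb /cubeN inCubeE ai andbT.
Qed.

Lemma edges_overlap k (Sa : idx d n -> N -> Prop) :
  (forall a x, Sa a x -> nodesIn (Nl R k (cube1 a)) x) ->
  forall i, #|[pred a | edges (Sa a) i]|%:R <= nb_count k.
Proof.
move=> hS i; rewrite ler_nat; apply: leq_trans (card_near k (cube_of i.1)).
apply: subset_leq_card; apply/subsetP => a; rewrite !inE => /andP [/asboolP /hS [b [hb]]].
rewrite inCubeE => /eqP <- _; apply/forallP => j.
by have [-> ->] := Nl_near n_gt0 hb j.
Qed.

Lemma local_overlap k (Sa : idx d n -> N -> Prop) w s v :
  (forall i, 0 <= w i) -> (forall a x, Sa a x -> nodesIn (Nl R k (cube1 a)) x) ->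
  \sum_a eform (edges (Sa a)) w s v v <= nb_count k * eform (edges allN) w s v v.
Proof.
move=> w0 hS; apply: eform_overlap => [i _ | a i | i _]; first exact: w0.
  exact: edges_sub.
exact: edges_overlap.
Qed.

Lemma patch_overlap l e :
  \sum_(a : idx d n) semiV (nodesIn (patch R l a)) e ^+ 2
  <= nb_count l * (M allN e e + L allN e e).
Proof.
have -> : \sum_(a : idx d n) semiV (nodesIn (patch R l a)) e ^+ 2
    = \sum_(a : idx d n) M (nodesIn (patch R l a)) e e
      + \sum_(a : idx d n) L (nodesIn (patch R l a)) e e.
  rewrite -big_split; apply: eq_bigr => a _.
  by rewrite sqr_sqrtr MformE LformE ?addr_ge0 ?M_ge0 ?L_ge0.
rewrite mulrDr; apply: lerD; apply: local_overlap => // i; [exact: wM_ge0 | exact: wL_ge0].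
Qed.

Variable mu : R.
Hypothesis mu_gt0 : 0 < mu.
Hypothesis poinc : poincare G mu n.

Lemma poincare_PiH h :
  M allN (fun x => h x - PiH n h x) (fun x => h x - PiH n h x)
  <= (mu / n%:R) ^+ 2 * (nb_count 1 * L allN h h).
Proof.
rewrite PiH_error_split; apply: le_trans (_ : \sum_a (mu / n%:R) ^+ 2 *
    L (nodesIn (Nb R (cube1 a))) h h <= _); last first.
  rewrite -mulr_sumr ler_wpM2l ?sqr_ge0 //.
  by apply: local_overlap => // i; exact: wL_ge0.
apply: ler_sum => a _; have [c hc] := poinc a h.
apply: le_trans (mean_best a h c) _; apply: sqrt_le_sqr; rewrite ?M_ge0 ?L_ge0 //.
  by rewrite divr_ge0 ?ler0n // ltW.
by move: hc; rewrite semiME semiLE.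
Qed.

Lemma projection_error h :
  semiM allN (fun x => h x - PiH n h x) <=
  mu * n%:R^-1 * Num.sqrt (nb_count 1) * semiL allN h.
Proof.
rewrite semiME semiLE; apply: le_trans (ler_wsqrtr (poincare_PiH h)) _.
rewrite sqrtrM ?sqr_ge0 // sqrtr_sqr ger0_norm; last by rewrite divr_ge0 ?ler0n // ltW.
by rewrite sqrtrM ?ler0n // mulrA.
Qed.

(* Pairing the projection error with any e only sees e - Pi_H e. *)
Lemma projection_pairing h e :
  M allN (fun x => h x - PiH n h x) e <=
  semiM allN (fun x => h x - PiH n h x) *
  (mu * n%:R^-1 * Num.sqrt (nb_count 1) * semiL allN e).
Proof.
have -> : M allN (fun x => h x - PiH n h x) e
    = M allN (fun x => h x - PiH n h x) (fun x => e x - PiH n e x).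
  by rewrite eformBr PiH_orth subr0.
apply: le_trans (M_CS _ _ _) _; rewrite -!semiME.
by apply: ler_wpM2l; [exact: sqrtr_ge0 | exact: projection_error].
Qed.

End Projection.

(* Solutions of a local problem K_omega^{-1} q differ by a function with
   vanishing jumps, hence act identically on every test function. *)
Lemma KinvOm_unique (S : N -> Prop) q phi1 phi2 :
  isKinvOm S q phi1 -> isKinvOm S q phi2 -> forall v, K allN phi1 v = K allN phi2 v.
Proof.
move=> [[V1 Z1] h1] [[V2 Z2] h2] v.
set del := fun x => phi1 x - phi2 x.
have delV : inVom S del.
  by split=> x hx; rewrite /del ?(V1 _ hx) ?(V2 _ hx) ?(Z1 _ hx) ?(Z2 _ hx) subr0.
have delK : K S del del = 0 by rewrite /del eformBl -!KformE h1 // h2 // subrr.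
have jumpS : forall i, edges S i -> jump 1 del i = 0.
  by apply: (eform_eq0 _ delK) => i /andP [_ a]; exact: wK_gt0.
have jump0 : forall i : N * N, adjG i.1 i.2 -> jump 1 del i = 0.
  move=> [x y] /= a; case: (pselect (S x)) => Sx.
    by apply: jumpS; rewrite /edges /= a andbT; apply/asboolP.
  case: (pselect (S y)) => Sy.
    have := jumpS (y, x); rewrite /edges /= -adj_sym a andbT /jump /= !mul1r.
    by move=> /(_ (asboolT Sy)) /eqP; rewrite subr_eq0 => /eqP ->; rewrite subrr.
  by rewrite /jump /= (proj2 delV _ Sx) (proj2 delV _ Sy) mulr0 subrr.
apply/eqP; rewrite -subr_eq0 -eformBl; apply/eqP; apply: big1 => i /andP [_ a].
by rewrite -/del (jump0 _ a) mul0r mulr0.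
Qed.

Definition agree_near (S : N -> Prop) (e e' : N -> R) : Prop :=
  forall x y, adjG x y -> S x \/ S y -> e x = e' x /\ e y = e' y.

Definition cutoff (S : N -> Prop) (e : N -> R) : N -> R :=
  fun x => if `[< S x \/ exists y, adjG x y /\ S y >] then e x else 0.

Lemma cutoff_Vtilde S e : inV e -> inVtilde S (cutoff S e).
Proof.
move=> eV; split=> [x hx | x nS nA]; rewrite /cutoff.
  by case: ifP => // _; exact: eV.
by rewrite asboolF // => -[// | [y [axy Sy]]]; exact: nA y axy Sy.
Qed.

Lemma cutoff_agree S e : agree_near S e (cutoff S e).
Proof.
have hS x : S x -> cutoff S e x = e x by move=> Sx; rewrite /cutoff asboolT //; left.
have hA x y : adjG x y -> S y -> cutoff S e x = e x.
  by move=> a Sy; rewrite /cutoff asboolT //; right; exists y.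
move=> x y a [Sx | Sy]; first by rewrite (hS x) // (hA y x) // adj_sym.
by rewrite (hS y) // (hA x y).
Qed.

Lemma K_agree S phi e e' : (forall x, ~ S x -> phi x = 0) -> agree_near S e e' ->
  K allN phi e = K allN phi e'.
Proof.
move=> phiS agr; apply: eform_ext => -[x y] /andP [_ a] /=; rewrite /jump /=.
case: (pselect (S x \/ S y)) => [hxy _ | nxy]; first by have [-> ->] := agr x y a hxy.
have [nSx nSy] : ~ S x /\ ~ S y by split=> h; apply: nxy; [left | right].
by rewrite (phiS x) // (phiS y) // mulr0 subrr eqxx.
Qed.

Lemma M_agree S g e e' : (forall x, ~ S x -> g x = 0) -> agree_near S e e' ->
  M allN g e = M allN g e'.
Proof.
move=> gS agr; apply: eform_ext => -[x y] /andP [_ a] /=; rewrite /jump /= !mul0r !subr0.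
case: (pselect (S x)) => [Sx _ | nSx]; first by have [-> _] := agr x y a (or_introl Sx).
by rewrite gS ?eqxx.
Qed.

Lemma seminorms_agree S e e' : agree_near S e e' ->
  L S e e = L S e' e' /\ M S e e = M S e' e'.
Proof.
move=> agr; split; apply: eform_ext2 => -[x y] /andP [/asboolP Sx a];
  by rewrite /jump /=; have [-> ->] := agr x y a (or_introl Sx).
Qed.

Lemma local_residual S g phi r e :
  (forall x, ~ S x -> g x = 0) -> isKinvOm S g phi -> isRq S g r -> inV e ->
  `|K allN phi e - M allN g e| <= semiV S r * semiV S e.
Proof.
move=> gS hphi [phi' [hphi' [_ hr]]] eV.
have agr := @cutoff_agree S e.
have phiS : forall x, ~ S x -> phi x = 0 by case: hphi => [[_ h] _].
rewrite (K_agree phiS agr) (M_agree gS agr) -(KinvOm_unique hphi' hphi).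
have := hr _ (cutoff_Vtilde S eV); rewrite LformE !MformE KformE => <-.
have [eL eM] := seminorms_agree agr.
rewrite /semiV !MformE !LformE eL eM; set et := cutoff S e.
apply: le_trans (ler_normD _ _) _.
apply: le_trans (lerD (eform_CS 1 (fun i _ => wL_ge0 i) r et)
  (eform_CS 0 (fun i _ => wM_ge0 i) r et)) _.
have := cauchy_schwarz2 (Num.sqrt (M S r r)) (Num.sqrt (L S r r))
  (Num.sqrt (M S et et)) (Num.sqrt (L S et et)).
by rewrite !sqr_sqrtr ?M_ge0 ?L_ge0 // addrC.
Qed.

Section SLODEstimate.
Variables (mu Cfr : R) (n l : nat).
Hypothesis alpha_le_beta : alpha <= beta.
Hypothesis mu_gt0 : 0 < mu.
Hypothesis n_gt0 : (0 < n)%N.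
Hypothesis poinc : poincare G mu n.
Hypothesis Cfr_ge0 : 0 <= Cfr.
Hypothesis friedrichs : forall v, inV v -> semiM allN v <= Cfr * semiL allN v.
Variables g phi r : idx d n -> N -> R.
Hypothesis basis : forall a, isSLODbasis l a (g a) (phi a) (r a).
Variable Cr : R.
Hypothesis Cr_gt0 : 0 < Cr.
Hypothesis stable : riesz g Cr.

Lemma span_V c : inV (fun x => \sum_a c a * phi a x).
Proof.
move=> x gx; rewrite big1 // => a _.
by case: (basis a) => _ [_ [[[V _] _] _]]; rewrite V ?mulr0.
Qed.

Lemma basis_support a x : ~ nodesIn (patch R l a) x -> g a x = 0.
Proof.
case: (basis a) => -[c hc] _ nS; rewrite hc big1 // => b /asboolP pb.
by rewrite /ind; case hb: (inCube b (p x)); [exfalso; apply: nS; exists b | rewrite mulr0].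
Qed.

(* Riesz stability makes the g_a linearly independent; since they are
   piecewise constant on as many cubes as there are g_a, they span
   P^0(T_H), which contains Pi_H f. *)
Lemma PiH_in_span f : exists c : idx d n -> R, forall x, \sum_a c a * g a x = PiH n f x.
Proof.
have /choice [co hco] : forall a, exists c : idx d n -> R,
    forall x, g a x = \sum_(b | `[< patch R l a b >]) c b * ind b x.
  by move=> a; case: (basis a) => h _.
pose co' a b := if `[< patch R l a b >] then co a b else 0.
have gE a x : g a x = \sum_b co' a b * ind b x.
  rewrite hco big_mkcond; apply: eq_bigr => b _.
  by rewrite /co'; case: ifP => _; rewrite ?mul0r.
have g_free (c : idx d n -> R) : (forall x, \sum_a c a * g a x = 0) -> forall a, c a = 0.
  move=> hc a; have /andP [lo _] := stable c.
  have : \sum_a c a ^+ 2 = 0.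
    apply/eqP; rewrite eq_le sumr_ge0 ?andbT => [|i _]; last exact: sqr_ge0.
    have iCr : 0 < Cr^-1 by rewrite invr_gt0.
    rewrite -(pmulr_rle0 _ iCr); apply: le_trans lo _.
    rewrite /semiM /Mform big1 ?sqrtr0 ?expr0n // => x _.
    by rewrite big1 ?mulr0 // => y _; rewrite hc !(mulr0, mul0r).
  by move=> /(psumr_eq0P (fun i _ => sqr_ge0 (c i))) /(_ a isT) /eqP; rewrite sqrf_eq0 => /eqP.
have [c hc] := span_square gE g_free (@cube_mean n f).
by exists c => x; rewrite hc.
Qed.

Lemma coef_bound f c : (forall x, \sum_a c a * g a x = PiH n f x) ->
  \sum_a c a ^+ 2 <= Cr * M allN f f.
Proof.
move=> hc; have /andP [lo _] := stable c.
move: lo; rewrite semiME sqr_sqrtr ?M_ge0 // ler_pdivrMl // => lo.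
apply: le_trans lo _; apply: ler_wpM2l; first exact: ltW.
have -> : (fun x => \sum_a c a * g a x) = PiH n f by apply/funext => x; rewrite hc.
exact: PiH_stable.
Qed.

Lemma basis_residual c e : inV e ->
  `|\sum_a c a * (K allN (phi a) e - M allN (g a) e)| <=
  sigma l r * Num.sqrt (\sum_a c a ^+ 2) *
  (Num.sqrt (nb_count l) * Num.sqrt (1 + Cfr ^+ 2) * semiL allN e).
Proof.
move=> eV; pose V (a : idx d n) := semiV (nodesIn (patch R l a)) e.
have sig0 : 0 <= sigma l r by exact: bigmax_ge_id.
have term a : `|K allN (phi a) e - M allN (g a) e| <= sigma l r * V a.
  case: (basis a) => _ [_ [hphi [hr _]]].
  apply: le_trans (local_residual (@basis_support a) hphi hr eV) _.
  by apply: ler_wpM2r; [exact: sqrtr_ge0 | exact: le_bigmax].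
have sumV : \sum_a V a ^+ 2 <= nb_count l * ((1 + Cfr ^+ 2) * L allN e e).
  apply: le_trans (patch_overlap n_gt0 l e) _; rewrite ler_wpM2l ?ler0n //.
  rewrite mulrDl mul1r addrC lerD2l; apply: sqrt_le_sqr; rewrite ?M_ge0 ?L_ge0 //.
  by rewrite -semiME -semiLE friedrichs.
apply: le_trans (ler_norm_sum _ _ _) _.
apply: le_trans (_ : sigma l r * \sum_a `|c a| * V a <= _).
  rewrite mulr_sumr; apply: ler_sum => a _; rewrite normrM mulrCA.
  by apply: ler_wpM2l; [exact: normr_ge0 | exact: term].
rewrite -mulrA ler_wpM2l //.
have CS := @cauchy_schwarz_sqrt R (idx d n) predT (fun _ => 1) (fun a => `|c a|) V
  (fun _ _ => ler01).
have -> : \sum_a `|c a| * V a = `|\sum_(a | predT a) 1 * (`|c a| * V a)|.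
  rewrite ger0_norm; first by apply: eq_bigr => a _; rewrite mul1r.
  by apply: sumr_ge0 => a _; rewrite mul1r mulr_ge0 ?sqrtr_ge0.
apply: le_trans CS _; apply: ler_pM; rewrite ?sqrtr_ge0 //.
  apply: ler_wsqrtr; apply: ler_sum => a _.
  by rewrite mul1r -normrM ger0_norm ?mulrr_ge0 // expr2.
rewrite semiLE -!sqrtrM ?ler0n ?mulr_ge0 ?addr_ge0 ?ler01 ?sqr_ge0 //.
apply: ler_wsqrtr; rewrite -mulrA; apply: le_trans sumV.
by apply: ler_sum => a _; rewrite mul1r expr2.
Qed.

Variables f u uH : N -> R.
Hypothesis sol : isKinv f u.
Hypothesis slod : isSLOD phi f uH.

Lemma galerkin_orth z : inSpan phi z -> K allN (fun x => u x - uH x) z = 0.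
Proof.
move=> [cz hz]; have zV : inV z by move=> x gx; rewrite hz; exact: span_V.
by rewrite eformBl -!KformE (proj2 sol z zV) (proj2 slod z (ex_intro _ cz hz)) subrr.
Qed.

Lemma galerkin_best v : inSpan phi v ->
  K allN (fun x => u x - uH x) (fun x => u x - uH x)
  <= K allN (fun x => u x - v x) (fun x => u x - v x).
Proof.
move=> [cv hv]; have [cH hH] := proj1 slod.
have wS : inSpan phi (fun x => uH x - v x).
  exists (fun a => cH a - cv a) => x.
  by rewrite hH hv -sumrB; apply: eq_bigr => a _; rewrite mulrBl.
have -> : (fun x => u x - v x) = (fun x => (u x - uH x) + (uH x - v x)).
  by apply/funext => x; rewrite addrA subrK.
by rewrite (eform_pythagoras (galerkin_orth wS)) lerDl K_ge0.
Qed.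

Lemma error_identity c : (forall x, \sum_a c a * g a x = PiH n f x) ->
  let e := fun x => u x - \sum_a c a * phi a x in
  K allN e e = M allN (fun x => f x - PiH n f x) e
               - \sum_a c a * (K allN (phi a) e - M allN (g a) e).
Proof.
move=> hc e; have eV : inV e by move=> x gx; rewrite /e (proj1 sol _ gx) (span_V c gx) subrr.
have piE : PiH n f = fun x => \sum_a c a * g a x by apply/funext => x; rewrite hc.
rewrite {1}/e eformBl -KformE (proj2 sol e eV) MformE eform_suml eformBl piE eform_suml.
have -> : \sum_a c a * (K allN (phi a) e - M allN (g a) e)
    = \sum_a c a * K allN (phi a) e - \sum_a c a * M allN (g a) e.
  by rewrite -sumrB; apply: eq_bigr => a _; rewrite mulrBr.
by rewrite opprB addrA subrK.
Qed.

(* Energy estimate: coercivity applied to the error identity bounds |e|_L,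
   and best approximation transfers the bound to u - u_{H,l}. *)
Lemma energy_error_bound :
  semiL allN (fun x => u x - uH x) <= Num.sqrt (beta / alpha) / alpha *
  (semiM allN (fun x => f x - PiH n f x) * (mu * n%:R^-1 * Num.sqrt (nb_count 1))
   + sigma l r * (Num.sqrt Cr * semiM allN f) *
     (Num.sqrt (nb_count l) * Num.sqrt (1 + Cfr ^+ 2))).
Proof.
have [c hc] := PiH_in_span f.
have := error_identity hc; set e := fun x => u x - _ => Kee.
have eV : inV e by move=> x gx; rewrite /e (proj1 sol _ gx) (span_V c gx) subrr.
set A := semiM allN (fun x => f x - PiH n f x).
set B := mu * n%:R^-1 * Num.sqrt (nb_count 1).
set Sg := sigma l r * (Num.sqrt Cr * semiM allN f).
set D := Num.sqrt (nb_count l) * Num.sqrt (1 + Cfr ^+ 2).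
have sig0 : 0 <= sigma l r by exact: bigmax_ge_id.
have Q0 : 0 <= A * B + Sg * D.
  by rewrite addr_ge0 ?mulr_ge0 ?sqrtr_ge0 ?invr_ge0 ?ler0n // ltW.
have bound_e : semiL allN e <= (A * B + Sg * D) / alpha.
  apply: coercive_bound; rewrite ?sqrtr_ge0 //.
  rewrite semiLE sqr_sqrtr ?L_ge0 //; apply: le_trans (L_le_K _ _) _.
  rewrite Kee mulrDl -semiLE -[A * B * _]mulrA -[Sg * D * _]mulrA; apply: lerD.
    exact: projection_pairing.
  have := ler_norm (- \sum_a c a * (K allN (phi a) e - M allN (g a) e)).
  rewrite normrN => /le_trans; apply; apply: le_trans (basis_residual c eV) _.
  apply: ler_wpM2r; first by rewrite !mulr_ge0 ?sqrtr_ge0.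
  rewrite ler_wpM2l // semiME -sqrtrM; last exact: ltW.
  by apply: ler_wsqrtr; exact: coef_bound.
have uH_e : L allN (fun x => u x - uH x) (fun x => u x - uH x) <= beta / alpha * L allN e e.
  rewrite mulrAC ler_pdivlMr // mulrC; apply: le_trans (L_le_K _ _) _.
  exact: le_trans (galerkin_best (ex_intro _ c (fun x => erefl _))) (K_le_L _ _).
rewrite semiLE; apply: le_trans (ler_wsqrtr uH_e) _.
have ba0 : 0 <= beta / alpha by rewrite divr_ge0 ?(le_trans (ltW alpha_gt0) alpha_le_beta) ?ltW.
rewrite sqrtrM // -semiLE -mulrA [_^-1 * _]mulrC.
by rewrite ler_wpM2l ?sqrtr_ge0.
Qed.

Hypothesis l_gt0 : (0 < l)%N.

Lemma main_estimate :
  semiL allN (fun x => u x - uH x) <=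
  Num.sqrt (beta / alpha) / alpha * (Num.sqrt (nb_count 1) * (mu + Num.sqrt (1 + Cfr ^+ 2))) *
  (n%:R^-1 * semiM allN (fun x => f x - PiH n f x)
   + Num.sqrt Cr * Num.sqrt (l%:R ^+ d) * sigma l r * semiM allN f).
Proof.
apply: le_trans energy_error_bound _.
rewrite -[X in _ <= X]mulrA; apply: ler_wpM2l; first by rewrite divr_ge0 ?sqrtr_ge0 // ltW.
set s3 := Num.sqrt (nb_count 1); set s1 := Num.sqrt (1 + Cfr ^+ 2).
set A := semiM allN _; set rest := Num.sqrt Cr * _ * _ * _.
have sig0 : 0 <= sigma l r by exact: bigmax_ge_id.
have nb_l : Num.sqrt (nb_count l) <= s3 * Num.sqrt (l%:R ^+ d).
  by rewrite -sqrtrM ?ler0n // ler_wsqrtr // nb_count_le.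
rewrite [s3 * _]mulrDr; apply: le_trans _ (cross_terms _ _ _ _); first apply: lerD.
- by have -> : A * (mu / n%:R * s3) = s3 * mu * (n%:R^-1 * A) by ring.
- have -> : s3 * s1 * rest = sigma l r * (Num.sqrt Cr * semiM allN f) *
      (s3 * Num.sqrt (l%:R ^+ d) * s1) by rewrite /rest; ring.
  apply: ler_wpM2l; first by rewrite !mulr_ge0 ?sqrtr_ge0.
  by apply: ler_wpM2r; [exact: sqrtr_ge0 | exact: nb_l].
- by rewrite mulr_ge0 ?sqrtr_ge0 // ltW.
- by rewrite mulr_ge0 ?sqrtr_ge0.
- by rewrite mulr_ge0 ?invr_ge0 ?ler0n ?sqrtr_ge0.
by rewrite /rest !mulr_ge0 ?sqrtr_ge0.
Qed.

End SLODEstimate.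
End WellFormed.
End Network.

Theorem mainTheorem9 (R : realType) (d : nat) (alpha beta mu Cfr : R) :
  0 < alpha -> alpha <= beta -> 0 < mu -> 0 < Cfr ->
  exists C C' : R, 0 < C /\ 0 < C' /\
  forall (G : network R d) (hs : seq nat),
    wf_network G alpha beta ->
    (forall v, inV v -> semiM (@allN _ _ G) v <= Cfr * semiL (@allN _ _ G) v) ->
    (forall n, n \in hs -> (0 < n)%N) ->
    (forall n, n \in hs -> netConn G n) ->
    (forall n, n \in hs -> poincare G mu n) ->
    forall (n l : nat), n \in hs -> (0 < l)%N ->
    forall g phi r : idx d n -> node G -> R,
      (forall a, isSLODbasis l a (g a) (phi a) (r a)) ->
    forall Cr : R, 0 < Cr -> riesz g Cr ->
    forall f u uH : node G -> R,
      isKinv f u -> isSLOD phi f uH ->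
      let H := n%:R^-1 : R in
      let rest := Num.sqrt Cr * Num.sqrt (l%:R ^+ d) * sigma l r
                  * semiM (@allN _ _ G) f in
      semiL (@allN _ _ G) (fun x => u x - uH x)
        <= C * (H * semiM (@allN _ _ G) (fun x => f x - PiH n f x) + rest)
      /\ C * (H * semiM (@allN _ _ G) (fun x => f x - PiH n f x) + rest)
        <= C' * (H ^+ 2 * semiL (@allN _ _ G) f + rest).
Proof.
move=> alpha_gt0 alpha_le_beta mu_gt0 Cfr_gt0.
set s3 := Num.sqrt (nb_count R d 1).
pose C := Num.sqrt (beta / alpha) / alpha * (s3 * (mu + Num.sqrt (1 + Cfr ^+ 2))).
have s3_gt0 : 0 < s3 by rewrite sqrtr_gt0 ltr0n expn_gt0.
have C_gt0 : 0 < C.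
  have ratio_gt0 : 0 < beta / alpha by rewrite divr_gt0 // (lt_le_trans alpha_gt0).
  have sum_gt0 : 0 < mu + Num.sqrt (1 + Cfr ^+ 2) by rewrite ltr_wpDr ?sqrtr_ge0.
  by rewrite /C !mulr_gt0 // ?invr_gt0 // sqrtr_gt0.
exists C, (C * (1 + mu * s3)); split=> //; split.
  by rewrite mulr_gt0 // ltr_wpDr ?ltr01 // mulr_ge0 // ltW.
move=> G hs wf friedrichs hs_gt0 _ hs_poinc n l hn l_gt0 g phi r basis Cr Cr_gt0
  stable f u uH sol slod H rest.
have n_gt0 := hs_gt0 n hn; have poinc := hs_poinc n hn.
split; first exact: (main_estimate wf alpha_gt0 alpha_le_beta mu_gt0 n_gt0 poinc
  (ltW Cfr_gt0) friedrichs basis Cr_gt0 stable sol slod l_gt0).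
have sig0 : 0 <= sigma l r by exact: bigmax_ge_id.
apply: weaken_projection_term.
- exact: ltW.
- by rewrite mulr_ge0 // ltW.
- by rewrite invr_ge0 ler0n.
- exact: sqrtr_ge0.
- by rewrite /rest !mulr_ge0 ?sqrtr_ge0.
by rewrite [mu * s3 * _]mulrAC; exact: (projection_error wf n_gt0 mu_gt0 poinc f).
Qed.
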